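(* Let $T:\mathcal{M}_d\to\mathcal{M}_d$ be a doubly stochastic quantum channel, $X\in\mathcal{M}_d$ positive definite and $q\geq2$. Then $$\|T(X)\|_{q,\frac{\mathbb{1}_d}{d}}^q-\|X\|_{q,\frac{\mathbb{1}_d}{d}}^q\leq-\mathcal{E}^2_{T^*T-\text{id}}(X^{q/2}).$$
   Context: Doubly stochastic channel: completely positive, trace preserving, $T(\mathbb{1})=T^*(\mathbb{1})=\mathbb{1}$ ($T^*$ the Hilbert–Schmidt adjoint). Weighted norm: $\|Y\|_{p,\frac{\mathbb{1}_d}{d}}=d^{-1/p}(\text{tr}|Y|^p)^{1/p}$. Dirichlet form: $\mathcal{E}^2_{\mathcal{L}}(Y)=-\frac1d\text{tr}[\mathcal{L}(Y)Y]$. *)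

From HB Require Import structures.
From mathcomp Require Import all_boot all_order all_algebra.
From mathcomp Require Import complex.
From mathcomp Require Import reals exp.
Set Implicit Arguments. Unset Strict Implicit. Unset Printing Implicit Defensive.
Import Order.TTheory GRing.Theory Num.Theory.
Local Open Scope ring_scope.
Local Open Scope complex_scope.

Section QDefs.
Variable R : realType.
Local Notation C := (R[i]).

Definition dag m n (A : 'M[C]_(m, n)) : 'M[C]_(n, m) := (map_mx Num.conj A)^T.

Definition psdmx d (A : 'M[C]_d) : Prop :=
  dag A = A /\ forall v : 'cV[C]_d, 0 <= (dag v *m A *m v) 0 0.
Definition posdefmx d (A : 'M[C]_d) : Prop :=
  dag A = A /\ forall v : 'cV[C]_d, v != 0 -> 0 < (dag v *m A *m v) 0 0.

(* functional calculus t |-> t^s on (Hermitian, positive semidefinite) matrices,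
   via the spectral decomposition A = P^-1 diag(lambda) P with P unitary *)
Definition mpow d (A : 'M[C]_d) (s : R) : 'M[C]_d :=
  invmx (spectralmx A)
  *m diag_mx (map_mx (fun z : C => ((complex.Re z) `^ s)%:C) (spectral_diag A))
  *m spectralmx A.

Definition absmx d (Y : 'M[C]_d) : 'M[C]_d := mpow (dag Y *m Y) (2^-1).

Definition wnorm d (p : R) (Y : 'M[C]_d) : R :=
  (d%:R) `^ (- p^-1) * (complex.Re (\tr (mpow (absmx Y) p))) `^ (p^-1).

Definition dirichlet d (L : 'M[C]_d -> 'M[C]_d) (Y : 'M[C]_d) : C :=
  - ((d%:R)^-1 * \tr (L Y *m Y)).

(* Hilbert--Schmidt adjoint: tr(B^* T(A)) = tr((hs_adj T B)^* A) *)
Definition hs_adj d (T : 'M[C]_d -> 'M[C]_d) (B : 'M[C]_d) : 'M[C]_d :=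
  \matrix_(i, j) \tr (dag (T (delta_mx i j)) *m B).

Definition linmap d (T : 'M[C]_d -> 'M[C]_d) : Prop :=
  forall (a : C) (A B : 'M[C]_d), T (a *: A + B) = a *: T A + T B.

(* positivity of a block matrix in M_k (x) M_d, given by its blocks B i j *)
Definition psd_blocks d k (B : 'I_k -> 'I_k -> 'M[C]_d) : Prop :=
  forall v : 'I_k -> 'cV[C]_d,
    0 <= \sum_(i < k) \sum_(j < k) (dag (v i) *m B i j *m v j) 0 0.

(* complete positivity: id_k (x) T is positive for every k *)
Definition completely_positive d (T : 'M[C]_d -> 'M[C]_d) : Prop :=
  forall (k : nat) (B : 'I_k -> 'I_k -> 'M[C]_d),
    psd_blocks B -> psd_blocks (fun i j => T (B i j)).

Definition trace_preserving d (T : 'M[C]_d -> 'M[C]_d) : Prop :=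
  forall A : 'M[C]_d, \tr (T A) = \tr A.

Definition doubly_stochastic d (T : 'M[C]_d -> 'M[C]_d) : Prop :=
  [/\ linmap T, completely_positive T, trace_preserving T,
      T 1%:M = 1%:M & hs_adj T 1%:M = 1%:M].

End QDefs.

(* Diagonalize X = P^-1 diag(x) P and T(X) = Q^-1 diag(m) Q with P, Q unitary.
   With p_k and q_i the rows of P and Q, the numbers
   a_ik = <q_i, T(|p_k><p_k|) q_i> form a row-stochastic matrix (T is positive
   and unital) and m_i = sum_k a_ik x_k.  Both weighted norms are power sums,
   d ||T(X)||^q = sum_i m_i^q and d ||X||^q = sum_k x_k^q, while for
   Y = X^(q/2) the Dirichlet form is
   -E(Y) = (tr(T(Y)^* T(Y)) - sum_k x_k^q) / d.  The Hilbert-Schmidt norm of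
   T(Y) dominates the squares of its diagonal entries sum_k a_ik x_k^(q/2) in
   the basis q_i, and each of these squares is at least m_i^q by Jensen's
   inequality for t |-> t^(q/2). *)

From HB Require Import structures.
From mathcomp Require Import all_boot all_order all_algebra.
From mathcomp Require Import complex.
From mathcomp Require Import reals exp.
From mathcomp Require Import sesquilinear spectral.
From mathcomp Require Import ring.
Set Implicit Arguments. Unset Strict Implicit. Unset Printing Implicit Defensive.
Import Order.TTheory GRing.Theory Num.Theory.
Local Open Scope ring_scope.
Local Open Scope complex_scope.
Local Open Scope sesquilinear_scope.

Section UnitaryDiagonalization.
Variable C : numClosedFieldType.

Definition udiag n (U : 'M[C]_n) (a : 'rV[C]_n) := invmx U *m diag_mx a *m U.

Lemma char_poly_similar n (U D : 'M[C]_n) : U \in unitmx ->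
  char_poly (invmx U *m D *m U) = char_poly D.
Proof.
move=> Uu; set U' := map_mx polyC U.
have eU : U' *m char_poly_mx (invmx U *m D *m U) = char_poly_mx D *m U'.
  rewrite /char_poly_mx mulmxBr mulmxBl -map_mxM !mulmxA mulmxV // mul1mx.
  by rewrite map_mxM scalar_mxC.
have := congr1 determinant eU; rewrite !det_mulmx mulrC => /mulIf; apply.
by rewrite /U' det_map_mx polyC_eq0 -unitfE -unitmxE.
Qed.

Lemma char_poly_diag_mx n (a : 'rV[C]_n) :
  char_poly (diag_mx a) = \prod_(x <- [seq a 0 i | i <- enum 'I_n]) ('X - x%:P).
Proof.
rewrite char_poly_trig ?diag_mx_is_trig // big_map big_enum /=.
by apply: eq_bigr => i _; rewrite mxE eqxx mulr1n.
Qed.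

(* Both diagonals list the roots of the characteristic polynomial of A. *)
Lemma sum_spectral_diag_udiag n (A U : 'M[C]_n) (a : 'rV[C]_n) (K : nmodType)
    (f : C -> K) :
  U \is unitarymx -> A = udiag U a ->
  \sum_i f (spectral_diag A 0 i) = \sum_i f (a 0 i).
Proof.
move=> Uu eA.
have /orthomx_spectralP eA' : A \is normalmx.
  by apply/orthomx_spectral_subproof; exists (U, a).
have e1 : char_poly A = char_poly (diag_mx (spectral_diag A)).
  by rewrite {1}eA' char_poly_similar // spectral_unit.
have e2 : char_poly A = char_poly (diag_mx a).
  by rewrite eA char_poly_similar // unitarymx_unit.
move: (etrans (esym e1) e2); rewrite !char_poly_diag_mx => /prod_XsubC_eq.
by move=> /(@perm_big K +%R 0 _ _ _ xpredT f); rewrite !big_map.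
Qed.

Lemma mxtrace_udiag n (U : 'M[C]_n) a : U \in unitmx ->
  \tr (udiag U a) = \sum_i a 0 i.
Proof. by move=> Uu; rewrite mxtrace_mulC mulmxA mulmxV // mul1mx mxtrace_diag. Qed.

Lemma udiag_mul n (U : 'M[C]_n) (a b : 'rV[C]_n) : U \in unitmx ->
  udiag U a *m udiag U b = udiag U (\row_i (a 0 i * b 0 i)).
Proof.
move=> Uu; rewrite /udiag -!mulmxA (mulmxA U) mulmxV // mul1mx.
rewrite !mulmxA; congr (_ *m _); rewrite -mulmxA; congr (_ *m _).
by apply/matrixP => i j; rewrite mul_diag_mx !mxE; case: (i == j); rewrite ?mulr0.
Qed.

Lemma udiag_trmxC n (U : 'M[C]_n) (a : 'rV[C]_n) : U \is unitarymx ->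
  (udiag U a)^t* = udiag U (map_mx Num.conj a).
Proof.
move=> Uu; rewrite /udiag !trmx_mul !map_mxM invmx_unitary // trmxCK mulmxA.
by rewrite tr_diag_mx map_diag_mx.
Qed.

Lemma udiag_sum_delta n (U : 'M[C]_n) (a : 'rV[C]_n) :
  udiag U a = \sum_k a 0 k *: (invmx U *m delta_mx k k *m U).
Proof.
rewrite /udiag diag_mx_sum_delta mulmx_sumr mulmx_suml; apply: eq_bigr => k _.
by rewrite -scalemxAr -scalemxAl.
Qed.

Lemma row_mul_col m n p (A : 'M[C]_(m, n)) (B : 'M[C]_(n, p)) i j :
  (row i A *m col j B) 0 0 = (A *m B) i j.
Proof. by rewrite !mxE; apply: eq_bigr => k _; rewrite !mxE. Qed.

Lemma row_trmxC m n (A : 'M[C]_(m, n)) i : (row i A)^t* = col i (A^t*).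
Proof. by rewrite tr_row map_col. Qed.

Lemma udiag_coef n (U A : 'M[C]_n) (a : 'rV[C]_n) i :
  U \is unitarymx -> A = udiag U a ->
  a 0 i = (row i U *m A *m (row i U)^t*) 0 0.
Proof.
move=> Uu ->; rewrite row_trmxC -row_mul row_mul_col /udiag invmx_unitary //.
rewrite !mulmxA (unitarymxP Uu) mul1mx -mulmxA (unitarymxP Uu) mulmx1.
by rewrite mxE eqxx mulr1n.
Qed.

Lemma row_unitary_form1 n (U : 'M[C]_n) i : U \is unitarymx ->
  (row i U *m (row i U)^t*) 0 0 = 1.
Proof. by move=> Uu; rewrite row_trmxC row_mul_col (unitarymxP Uu) mxE eqxx. Qed.

Lemma form_delta n (A : 'M[C]_n) i j :
  ((delta_mx i 0 : 'cV[C]_n)^t* *m A *m (delta_mx j 0 : 'cV[C]_n)) 0 0 = A i j.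
Proof.
have -> : (delta_mx i 0 : 'cV[C]_n)^t* = delta_mx 0 i.
  by rewrite trmx_delta map_delta_mx.
by rewrite -rowE -colE !mxE.
Qed.

Lemma conj_eq_of_real_polar (z w : C) :
  z + w \is Num.real -> 'i * (z - w) \is Num.real -> w = Num.conj z.
Proof.
move=> /CrealP; rewrite rmorphD /= => e1 /CrealP.
rewrite rmorphM rmorphB /= conjCi mulNr -mulrN opprB => /(mulfI (neq0Ci C)) e2.
apply: (@mulfI _ 2%:R); first by rewrite pnatr_eq0.
have -> : 2%:R * w = (z + w) - (z - w) by ring.
by rewrite -e1 -e2; ring.
Qed.

Lemma real_form_hermitian n (A : 'M[C]_n) :
  (forall v : 'cV[C]_n, (v^t* *m A *m v) 0 0 \is Num.real) -> A^t* = A.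
Proof.
move=> Areal; pose g (u v : 'cV[C]_n) := (u^t* *m A *m v) 0 0.
have gD u v : g (u + v) (u + v) = g u u + g v v + (g u v + g v u).
  rewrite /g; have -> : (u + v)^t* = u^t* + v^t*.
    by apply/matrixP => i j; rewrite !mxE rmorphD.
  by rewrite !mulmxDl !mulmxDr !mxE; ring.
have gZ u v (c : C) : g u (c *: v) = c * g u v by rewrite /g -scalemxAr mxE.
have gZl u v (c : C) : g (c *: u) v = Num.conj c * g u v.
  by rewrite /g linearZ /= map_mxZ -!scalemxAl !mxE.
have cross_real u v : g u v + g v u \is Num.real.
  have -> : g u v + g v u = g (u + v) (u + v) - g u u - g v v by rewrite gD; ring.
  by apply: rpredB; [apply: rpredB|]; apply: Areal.
apply/matrixP => i j; rewrite !mxE.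
pose ei := delta_mx i 0 : 'cV[C]_n; pose ej := delta_mx j 0 : 'cV[C]_n.
suff -> : A i j = Num.conj (A j i) by [].
(* Polarization: g u v + g v u is real, and so is i (g u v - g v u) by u := i u. *)
rewrite -!(form_delta A); apply: conj_eq_of_real_polar; first exact: cross_real.
have := cross_real ej ('i *: ei); rewrite gZ gZl conjCi mulNr.
by rewrite mulrBr.
Qed.

Lemma form_udiag_delta_ge0 n (U : 'M[C]_n) k (v : 'cV[C]_n) : U \is unitarymx ->
  0 <= (v^t* *m (invmx U *m delta_mx k k *m U) *m v) 0 0.
Proof.
move=> Uu; rewrite invmx_unitary //.
pose c : 'M[C]_1 := delta_mx 0 k *m (U *m v).
suff -> : v^t* *m (U^t* *m delta_mx k k *m U) *m v = c^t* *m c.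
  by rewrite mxE big_ord1 !mxE mulrC mul_conjC_ge0.
have -> : delta_mx k k = (delta_mx k 0 : 'cV[C]_n) *m delta_mx 0 k.
  by rewrite mul_delta_mx.
by rewrite /c !trmx_mul !map_mxM trmx_delta map_delta_mx !mulmxA.
Qed.

Lemma sum_diag_form_sqr_le_mxtrace n (U W : 'M[C]_n) : U \is unitarymx ->
  \sum_i Num.conj ((row i U *m W *m (row i U)^t*) 0 0) *
         (row i U *m W *m (row i U)^t*) 0 0
  <= \tr (W^t* *m W).
Proof.
move=> Uu; have UtU : U^t* *m U = 1%:M.
  by rewrite -invmx_unitary // mulVmx // unitarymx_unit.
set W' := U *m W *m U^t*.
have eW' i : (row i U *m W *m (row i U)^t*) 0 0 = W' i i.
  by rewrite row_trmxC -row_mul row_mul_col.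
have -> : \tr (W^t* *m W) = \tr (W'^t* *m W').
  have -> : W'^t* = U *m W^t* *m U^t*.
    by rewrite /W' !trmx_mul !map_mxM trmxCK !mulmxA.
  rewrite /W' !mulmxA -(mulmxA (U *m W^t*) (U^t*) U) UtU mulmx1.
  by rewrite [RHS]mxtrace_mulC !mulmxA UtU mul1mx.
under eq_bigr do rewrite eW'; clearbody W'.
rewrite /mxtrace; apply: ler_sum => i _.
rewrite mxE (bigD1 i) //= !mxE -[X in X <= _]addr0 lerD2l.
by apply: sumr_ge0 => j _; rewrite !mxE mulrC mul_conjC_ge0.
Qed.

End UnitaryDiagonalization.

Section RealPowers.
Variable R : realType.

(* Young's inequality with the conjugate exponents r and r / (r - 1). *)
Lemma powR_tangent_le (r x m : R) : 1 <= r -> 0 <= x -> 0 < m ->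
  r * m `^ (r - 1) * x <= x `^ r + (r - 1) * m `^ r.
Proof.
move=> r1 x0 m0; have [->|rn1] := eqVneq r 1.
  by rewrite subrr powRr0 !mul1r powRr1 // mul0r addr0.
have r0 : 0 < r by apply: lt_le_trans r1.
have r10 : 0 < r - 1 by rewrite subr_gt0 lt_neqAle eq_sym rn1.
pose s := r / (r - 1).
have s0 : 0 < s by rewrite divr_gt0.
have rs : r^-1 + s^-1 = 1.
  by rewrite /s invf_div -{1}(div1r r) -mulrDl subrKC mulfV // gt_eqF.
have e1 : (r - 1) * s = r by rewrite /s mulrCA mulfV ?gt_eqF // mulr1.
have e2 : r * (m `^ r / s) = (r - 1) * m `^ r.
  by rewrite /s invf_div mulrCA [r * _]mulrCA mulfV ?gt_eqF // mulr1 mulrC.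
have := conjugate_powR x0 (powR_ge0 m (r - 1)) r0 s0 rs.
rewrite -powRrM e1 => /(ler_wpM2l (ltW r0)) young.
rewrite -mulrA (mulrC _ x); apply: le_trans young _.
by rewrite mulrDr e2 mulrCA mulfV ?gt_eqF // mulr1.
Qed.

Lemma jensen_powR (I : finType) (a x : I -> R) (r : R) : 1 <= r ->
  (forall k, 0 <= a k) -> \sum_k a k = 1 -> (forall k, 0 <= x k) ->
  (\sum_k a k * x k) `^ r <= \sum_k a k * x k `^ r.
Proof.
move=> r1 a0 a1 x0; have r0 : 0 < r by apply: lt_le_trans r1.
set m := \sum_k a k * x k.
have [->|m_neq0] := eqVneq m 0.
  by rewrite powR0 ?gt_eqF //; apply: sumr_ge0 => k _; rewrite mulr_ge0 ?powR_ge0.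
have m0 : 0 < m.
  by rewrite lt_neqAle eq_sym m_neq0; apply: sumr_ge0 => k _; apply: mulr_ge0.
(* Average the tangent-line bounds at the mean m. *)
have tangent k : a k * (r * m `^ (r - 1) * x k - (r - 1) * m `^ r) <= a k * x k `^ r.
  by apply: ler_wpM2l => //; rewrite lerBlDr powR_tangent_le.
apply: le_trans (ler_sum _ (fun k _ => tangent k)).
under eq_bigr do rewrite mulrBr mulrCA [a _ * (_ * _)]mulrC.
rewrite sumrB -!mulr_sumr a1 mulr1 -/m -mulrA (mulrC (m `^ (r - 1))).
rewrite mulr_powRB1 ?(ltW m0) // -mulrBl.
by rewrite (_ : r - (r - 1) = 1) ?mul1r //; ring.
Qed.

Lemma powR_mean_le_sqr_mean (I : finType) (a x : I -> R) (q : R) : 2 <= q ->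
  (forall k, 0 <= a k) -> \sum_k a k = 1 -> (forall k, 0 <= x k) ->
  (\sum_k a k * x k) `^ q <= (\sum_k a k * x k `^ (q / 2)) ^+ 2.
Proof.
move=> q2 a0 a1 x0.
have m0 : 0 <= \sum_k a k * x k by apply: sumr_ge0 => k _; apply: mulr_ge0.
have -> : (\sum_k a k * x k) `^ q = ((\sum_k a k * x k) `^ (q / 2)) ^+ 2.
  by rewrite -(powR_mulrn 2 (powR_ge0 _ _)) -powRrM divfK ?pnatr_eq0.
rewrite ler_sqr ?nnegrE ?powR_ge0 //; last first.
  by apply: sumr_ge0 => k _; rewrite mulr_ge0 ?powR_ge0.
by apply: jensen_powR => //; rewrite ler_pdivlMr // mul1r.
Qed.

End RealPowers.

Section NonnegativeComplex.
Variable R : realType.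

Lemma complex_ge0E (z : R[i]) : 0 <= z -> z = (complex.Re z)%:C.
Proof. by move=> /ger0_real /RRe_real. Qed.

Lemma Re_ge0 (z : R[i]) : 0 <= z -> 0 <= complex.Re z.
Proof. by rewrite lecE => /andP[]. Qed.

Lemma real_complex_real (x : R) : (x%:C : R[i]) \is Num.real.
Proof. by apply/complex_realP; exists x. Qed.

End NonnegativeComplex.

Section FunctionalCalculus.
Variable R : realType.
Local Notation C := R[i].

Lemma dagE m n (A : 'M[C]_(m, n)) : dag A = A^t*.
Proof. by rewrite /dag map_trmx. Qed.

Definition eigval n (A : 'M[C]_n) k := complex.Re (spectral_diag A 0 k).

Lemma mpowE n (A : 'M[C]_n) s :
  mpow A s = udiag (spectralmx A) (\row_k (eigval A k `^ s)%:C).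
Proof.
apply: (congr1 (fun a => invmx (spectralmx A) *m diag_mx a *m spectralmx A)).
by apply/rowP => k; rewrite !mxE.
Qed.

Lemma mxtrace_mpow n (A : 'M[C]_n) s :
  \tr (mpow A s) = (\sum_k eigval A k `^ s)%:C.
Proof.
rewrite mpowE mxtrace_udiag ?spectral_unit // rmorph_sum.
by apply: eq_bigr => k _; rewrite mxE.
Qed.

Lemma mpow_hermitian n (A : 'M[C]_n) s : dag (mpow A s) = mpow A s.
Proof.
rewrite mpowE dagE (udiag_trmxC _ (spectral_unitarymx A)); apply: congr1.
by apply/rowP => k; rewrite !mxE conj_Creal ?real_complex_real.
Qed.

Lemma mxtrace_mpow_sqr n (A : 'M[C]_n) s : s + s != 0 ->
  \tr (mpow A s *m mpow A s) = (\sum_k eigval A k `^ (s + s))%:C.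
Proof.
move=> s2; have PU := spectral_unit A.
rewrite mpowE (udiag_mul _ _ PU) (mxtrace_udiag _ PU).
by rewrite rmorph_sum; apply: eq_bigr => k _; rewrite !mxE -rmorphM -powRD ?(negbTE s2).
Qed.

Lemma hermitian_udiag n (A : 'M[C]_n) :
  dag A = A -> A = udiag (spectralmx A) (spectral_diag A).
Proof. by rewrite dagE => hA; apply/orthomx_spectralP/normalmxP; rewrite hA. Qed.

Lemma posdefmx_psd n (A : 'M[C]_n) : posdefmx A -> psdmx A.
Proof.
case=> hA Agt0; split=> // v; have [->|v_neq0] := eqVneq v 0.
  by rewrite mulmx0 mxE.
exact/ltW/Agt0.
Qed.

Lemma psdmx_spectral_diag_ge0 n (A : 'M[C]_n) k :
  psdmx A -> 0 <= spectral_diag A 0 k.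
Proof.
case=> hA Age0; rewrite (udiag_coef k (spectral_unitarymx A) (hermitian_udiag hA)).
by have := Age0 ((row k (spectralmx A))^t*); rewrite dagE trmxCK.
Qed.

Lemma eigval_ge0 n (A : 'M[C]_n) k : psdmx A -> 0 <= eigval A k.
Proof. by move=> /(psdmx_spectral_diag_ge0 k)/Re_ge0. Qed.

Lemma psdmx_udiag n (A : 'M[C]_n) :
  psdmx A -> A = udiag (spectralmx A) (\row_k (eigval A k)%:C).
Proof.
move=> psdA; rewrite {1}(hermitian_udiag psdA.1); apply: congr1.
by apply/rowP => k; rewrite mxE -complex_ge0E ?psdmx_spectral_diag_ge0.
Qed.

Lemma mxtrace_mpow_absmx n (Y U : 'M[C]_n) (r : 'I_n -> R) q :
  U \is unitarymx -> (forall i, 0 <= r i) -> Y = udiag U (\row_i (r i)%:C) ->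
  \tr (mpow (absmx Y) q) = (\sum_i r i `^ q)%:C.
Proof.
move=> Uu r0 eY.
have eYY : dag Y *m Y = udiag U (\row_i (r i ^+ 2)%:C).
  rewrite eY dagE (udiag_trmxC _ Uu) (udiag_mul _ _ (unitarymx_unit Uu)).
  apply: congr1.
  by apply/rowP => i; rewrite !mxE conj_Creal ?real_complex_real // -rmorphM expr2.
rewrite mxtrace_mpow /absmx /eigval; congr (_%:C).
rewrite (sum_spectral_diag_udiag (fun z => complex.Re z `^ q)
  (spectral_unitarymx _) (mpowE _ _)).
transitivity (\sum_i (complex.Re (spectral_diag (dag Y *m Y) 0 i) `^ 2^-1) `^ q).
  by apply: eq_bigr => i _; rewrite mxE.
rewrite (sum_spectral_diag_udiag (fun z => (complex.Re z `^ 2^-1) `^ q) Uu eYY).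
apply: eq_bigr => i _; rewrite mxE /=.
by rewrite powR12_sqrt ?sqr_ge0 // sqrtr_sqr ger0_norm.
Qed.

Lemma wnorm_udiag n (Y U : 'M[C]_n) (r : 'I_n -> R) q : (0 < n)%N -> 0 < q ->
  U \is unitarymx -> (forall i, 0 <= r i) -> Y = udiag U (\row_i (r i)%:C) ->
  wnorm q Y `^ q = n%:R^-1 * \sum_i r i `^ q.
Proof.
move=> n0 q0 Uu r0 eY; rewrite /wnorm (mxtrace_mpow_absmx q Uu r0 eY) /=.
have S0 : 0 <= \sum_i r i `^ q by apply: sumr_ge0 => i _; exact: powR_ge0.
rewrite powRM ?powR_ge0 // -!powRrM mulNr mulVf ?gt_eqF //.
by rewrite (powR_inv1 (ler0n _ n)) (powRr1 S0).
Qed.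

End FunctionalCalculus.

Section PositiveMaps.
Variable R : realType.
Local Notation C := R[i].
Variables (n : nat) (T : 'M[C]_n -> 'M[C]_n).

Lemma cp_form_ge0 : completely_positive T -> forall A : 'M[C]_n,
  (forall v : 'cV[C]_n, 0 <= (dag v *m A *m v) 0 0) ->
  forall v : 'cV[C]_n, 0 <= (dag v *m T A *m v) 0 0.
Proof.
move=> cpT A Age0 v.
have := cpT 1%N (fun _ _ => A); rewrite /psd_blocks => /(_ _ (fun=> v)).
rewrite !big_ord1; apply.
by move=> u; rewrite !big_ord1.
Qed.

Lemma psdmx_cp : completely_positive T -> forall A, psdmx A -> psdmx (T A).
Proof.
move=> cpT A [_ Age0]; have TAge0 := cp_form_ge0 cpT Age0.
split; last exact: TAge0.
rewrite dagE; apply: real_form_hermitian => v.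
by have := TAge0 v; rewrite dagE => /ger0_real.
Qed.

Hypothesis lT : linmap T.

Lemma linmap0 : T 0 = 0.
Proof.
have := lT 1 0 0; rewrite !scale1r addr0 => T00.
by apply: (addrI (T 0)); rewrite addr0 -T00.
Qed.

Lemma linmapD A B : T (A + B) = T A + T B.
Proof. by have := lT 1 A B; rewrite !scale1r. Qed.

Lemma linmapZ a A : T (a *: A) = a *: T A.
Proof. by have := lT a A 0; rewrite !addr0 linmap0 addr0. Qed.

Lemma linmap_sum (I : finType) (F : I -> 'M[C]_n) : T (\sum_i F i) = \sum_i T (F i).
Proof. by apply: (big_morph T linmapD linmap0). Qed.

Lemma mxtrace_hs_adj (B Y : 'M[C]_n) : dag Y = Y ->
  \tr (hs_adj T B *m Y) = \tr (dag (T Y) *m B).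
Proof.
move=> hY.
have -> : dag (T Y) = \sum_i \sum_j Y j i *: dag (T (delta_mx i j)).
  rewrite {1}[Y]matrix_sum_delta linmap_sum; apply/matrixP => a b.
  rewrite !mxE !summxE rmorph_sum; apply: eq_bigr => i _.
  rewrite linmap_sum !summxE rmorph_sum; apply: eq_bigr => j _.
  have -> : Y j i = Num.conj (Y i j) by rewrite -{1}hY !mxE.
  by rewrite linmapZ !mxE rmorphM.
rewrite mulmx_suml raddf_sum /= [LHS]/mxtrace; apply: eq_bigr => i _.
rewrite mxE mulmx_suml raddf_sum /=; apply: eq_bigr => j _.
by rewrite -scalemxAl mxtraceZ !mxE mulrC.
Qed.

Lemma dirichlet_hs_adj (Y : 'M[C]_n) : dag Y = Y ->
  - dirichlet (fun Z => hs_adj T (T Z) - Z) Y =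
  n%:R^-1 * (\tr (dag (T Y) *m T Y) - \tr (Y *m Y)).
Proof. by move=> hY; rewrite /dirichlet opprK mulmxBl raddfB /= mxtrace_hs_adj. Qed.

Section Channel.
Variables P Q : 'M[C]_n.
Hypotheses (Pu : P \is unitarymx) (Qu : Q \is unitarymx).
Hypothesis cpT : completely_positive T.

Local Notation form i A := ((row i Q *m A *m (row i Q)^t*) 0 0).

Definition channel_weight i k := complex.Re (form i (T (invmx P *m delta_mx k k *m P))).

Lemma channel_form_delta_ge0 i k : 0 <= form i (T (invmx P *m delta_mx k k *m P)).
Proof.
have := cp_form_ge0 cpT (A := invmx P *m delta_mx k k *m P) _ ((row i Q)^t*).
rewrite dagE trmxCK; apply=> v; rewrite dagE; exact: (form_udiag_delta_ge0 k v Pu).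
Qed.

Lemma channel_weight_ge0 i k : 0 <= channel_weight i k.
Proof. exact/Re_ge0/channel_form_delta_ge0. Qed.

Lemma channel_form_udiag i (c : 'I_n -> R) :
  form i (T (udiag P (\row_k (c k)%:C))) = (\sum_k channel_weight i k * c k)%:C.
Proof.
rewrite udiag_sum_delta; under eq_bigr do rewrite mxE.
rewrite linmap_sum mulmx_sumr mulmx_suml summxE rmorph_sum.
apply: eq_bigr => k _; rewrite linmapZ -scalemxAr -scalemxAl mxE.
by rewrite [X in _ * X]complex_ge0E ?channel_form_delta_ge0 // rmorphM mulrC.
Qed.

Lemma channel_weight_sum1 : T 1%:M = 1%:M -> forall i, \sum_k channel_weight i k = 1.
Proof.
move=> T1 i; have := channel_form_udiag i (fun=> 1).
have -> : udiag P (\row_k (1 : R)%:C) = 1%:M.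
  rewrite /udiag (_ : \row_k _ = const_mx 1); last by apply/rowP => k; rewrite !mxE.
  by rewrite diag_const_mx mulmx1 (mulVmx (unitarymx_unit Pu)).
rewrite T1 mulmx1 row_unitary_form1 //; under eq_bigr do rewrite mulr1.
by move/(congr1 (@complex.Re R)).
Qed.

Lemma channel_eigval X (x m : 'I_n -> R) i :
  X = udiag P (\row_k (x k)%:C) -> T X = udiag Q (\row_i (m i)%:C) ->
  m i = \sum_k channel_weight i k * x k.
Proof.
move=> eX eTX; apply: complexI.
by have := udiag_coef i Qu eTX; rewrite mxE => ->; rewrite eX channel_form_udiag.
Qed.

Lemma sum_sqr_channel_le_mxtrace (c : 'I_n -> R) (Y : 'M[C]_n) :
  Y = udiag P (\row_k (c k)%:C) ->
  (\sum_i (\sum_k channel_weight i k * c k) ^+ 2)%:C <= \tr (dag (T Y) *m T Y).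
Proof.
move=> ->; rewrite dagE; apply: le_trans (sum_diag_form_sqr_le_mxtrace _ Qu).
under [X in _ <= X]eq_bigr => i _ do
  rewrite channel_form_udiag (conj_Creal (real_complex_real _)) -rmorphM -expr2.
by rewrite rmorph_sum.
Qed.

End Channel.
End PositiveMaps.

Theorem mainTheorem14 (R : realType) (d : nat) (T : 'M[R[i]]_d -> 'M[R[i]]_d)
  (X : 'M[R[i]]_d) (q : R) :
  (0 < d)%N -> doubly_stochastic T -> posdefmx X -> 2 <= q ->
  ((wnorm q (T X)) `^ q - (wnorm q X) `^ q)%:C
    <= - dirichlet (fun Y => hs_adj T (T Y) - Y) (mpow X (q / 2)).
Proof.
move=> d0 [lT cpT _ T1 _] /posdefmx_psd psdX q2.
have q0 : 0 < q by apply: lt_le_trans q2.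
have psdTX := psdmx_cp cpT psdX.
have Pu := spectral_unitarymx X; have Qu := spectral_unitarymx (T X).
have eX := psdmx_udiag psdX; have eTX := psdmx_udiag psdTX.
pose w := channel_weight T (spectralmx X) (spectralmx (T X)).
have jensen i : eigval (T X) i `^ q <= (\sum_k w i k * eigval X k `^ (q / 2)) ^+ 2.
  rewrite (channel_eigval lT Pu Qu cpT i eX eTX).
  apply: powR_mean_le_sqr_mean => //.
  - exact: channel_weight_ge0 (spectralmx (T X)) Pu cpT i.
  - exact: (channel_weight_sum1 lT Pu Qu cpT T1 i).
  - by move=> k; apply: eigval_ge0.
(* A plain [rewrite] would try to unify [wnorm q (T X)] with [wnorm q X] by
   unfolding the spectral decompositions; the explicit motive avoids this. *)
apply: (eq_ind_r (fun a => (a - _)%:C <= _) _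
  (wnorm_udiag d0 q0 Qu (fun i => eigval_ge0 i psdTX) eTX)).
apply: (eq_ind_r (fun b => (_ - b)%:C <= _) _
  (wnorm_udiag d0 q0 Pu (fun k => eigval_ge0 k psdX) eX)).
rewrite [E in _ <= E](dirichlet_hs_adj lT (mpow_hermitian X _)).
rewrite mxtrace_mpow_sqr -?splitr ?gt_eqF //.
rewrite -mulrBr rmorphM fmorphV rmorph_nat; apply: ler_wpM2l.
  by rewrite invr_ge0 ler0n.
rewrite rmorphB lerD2r; apply: le_trans (sum_sqr_channel_le_mxtrace lT Pu Qu cpT (mpowE _ _)).
by rewrite lecR; apply: ler_sum => i _; apply: jensen.
Qed.
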